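(* Let $n\ge2$, $K\in\mathcal S_n$, let $0<R<1$ and assume $K\subseteq B(0,R)$ and $K^c\subseteq B(0,R)$. Then \[ B\Big(0,\sqrt{\tfrac54-R^2}-\tfrac12\Big)\subseteq K^c\cup(-K). \]
   Context: $B(x,r)$ is the closed Euclidean ball. For $A\subseteq\mathbb R^n$, $A^c=\bigcap_{x\in A}B(x,1)$ (with $\emptyset^c=\mathbb R^n$). $\mathcal S_n$ is the class of all sets of the form $\bigcap_{x\in A}B(x,1)$, $A\subseteq\mathbb R^n$. $-K=\{-x:x\in K\}$. *)

From mathcomp Require Import all_boot all_order all_algebra.
From mathcomp Require Import boolp classical_sets reals.
Set Implicit Arguments. Unset Strict Implicit. Unset Printing Implicit Defensive.
Import Order.TTheory GRing.Theory Num.Theory.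
Local Open Scope ring_scope.
Local Open Scope classical_set_scope.

Definition enorm {R : realType} {n : nat} (x : 'rV[R]_n) : R :=
  Num.sqrt (\sum_(i < n) x ord0 i ^+ 2).

Definition cball {R : realType} {n : nat} (x : 'rV[R]_n) (r : R) : set 'rV[R]_n :=
  [set y | enorm (y - x) <= r].

(* A^c = intersection over x in A of B(x,1); empty A gives the whole space *)
Definition bcomp {R : realType} {n : nat} (A : set 'rV[R]_n) : set 'rV[R]_n :=
  [set y | forall x, A x -> cball x 1 y].

Definition in_Sn {R : realType} {n : nat} (K : set 'rV[R]_n) : Prop :=
  exists A : set 'rV[R]_n, K = bcomp A.

Definition setneg {R : realType} {n : nat} (K : set 'rV[R]_n) : set 'rV[R]_n :=
  [set y | K (- y)].

(* Suppose [-x] lies outside [K = A^c], witnessed by [a] in [A] with [|x + a| > 1], while some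
   [y] in [K] has [|x - y| > 1]. Since [a] lies in [K^c], both [a] and [y] are in [B(0,R)], and
   [|y - a| <= 1]. Expanding [0 <= |p (a - y) - x|^2] gives [<a - y, x> <= p] for [|x| <= p],
   and adding the expansions of [|x - y|^2 > 1] and [|x + a|^2 > 1] then forces
   [p^2 + p + R^2 > 1]. The radius [p = sqrt(5/4 - R^2) - 1/2] is the positive root of
   [p^2 + p + R^2 = 1], so [|x| <= p] is impossible. The argument works in every dimension. *)
From mathcomp Require Import all_boot all_order all_algebra.
From mathcomp Require Import boolp classical_sets reals.
From mathcomp Require Import lra.
Import Order.TTheory GRing.Theory Num.Theory.
Local Open Scope ring_scope.
Local Open Scope classical_set_scope.

Section Dot.
Context {R : comPzRingType} {n : nat}.
Implicit Types u v w : 'rV[R]_n.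

Definition dot u v : R := \sum_(i < n) u ord0 i * v ord0 i.

Lemma dotC u v : dot u v = dot v u.
Proof. by apply: eq_bigr => i _; rewrite mulrC. Qed.

Lemma dotDl u v w : dot (u + v) w = dot u w + dot v w.
Proof. by rewrite /dot -big_split; apply: eq_bigr => i _; rewrite !mxE mulrDl. Qed.

Lemma dotNl u w : dot (- u) w = - dot u w.
Proof. by rewrite /dot -sumrN; apply: eq_bigr => i _; rewrite !mxE mulNr. Qed.

Lemma dotZl c u w : dot (c *: u) w = c * dot u w.
Proof. by rewrite /dot mulr_sumr; apply: eq_bigr => i _; rewrite !mxE mulrA. Qed.

Lemma dotDr u v w : dot w (u + v) = dot w u + dot w v.
Proof. by rewrite dotC dotDl !(dotC w). Qed.

Lemma dotNr u w : dot w (- u) = - dot w u.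
Proof. by rewrite dotC dotNl dotC. Qed.

Lemma dotZr c u w : dot w (c *: u) = c * dot w u.
Proof. by rewrite dotC dotZl dotC. Qed.

Definition dotE := (dotDl, dotDr, dotNl, dotNr, dotZl, dotZr).

End Dot.

Section DotReal.
Context {R : realFieldType} {n : nat}.
Implicit Types u v x y a : 'rV[R]_n.

Lemma dot_ge0 u : 0 <= dot u u.
Proof. by apply: sumr_ge0 => i _; rewrite -expr2 sqr_ge0. Qed.

Lemma dot_AMGM c u v : 2 * c * dot u v <= c ^+ 2 * dot u u + dot v v.
Proof. by have := dot_ge0 (c *: u - v); rewrite !dotE (dotC v u); lra. Qed.

Lemma dot_le_of_sqr_le p u v :
  0 < p -> dot u u <= 1 -> dot v v <= p ^+ 2 -> dot u v <= p.
Proof. move=> p0 u1 vp; have := dot_AMGM p u v; nra. Qed.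

Lemma dot_add_lt1 {p r x y a} : 0 < p -> p ^+ 2 + p + r ^+ 2 = 1 ->
  dot x x <= p ^+ 2 -> dot y y <= r ^+ 2 -> dot a a <= r ^+ 2 ->
  dot (y - a) (y - a) <= 1 -> 1 < dot (x - y) (x - y) ->
  dot (x + a) (x + a) < 1.
Proof.
move=> p0 pr xp yr ar ya xy.
have ayx : dot (a - y) x <= p.
  by apply: dot_le_of_sqr_le => //; rewrite -opprB dotNl dotNr opprK.
move: ya xy ayx; rewrite !dotE (dotC x y) (dotC x a) (dotC a y) => ya xy ayx.
nra.
Qed.

End DotReal.

Section Euclid.
Context {R : realType} {n : nat}.
Implicit Types (u : 'rV[R]_n) (A : set 'rV[R]_n).

Lemma enorm_le u c : 0 <= c -> (enorm u <= c) = (dot u u <= c ^+ 2).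
Proof.
move=> c0; have normE u' : enorm u' = Num.sqrt (dot u' u').
  by rewrite /enorm /dot; congr Num.sqrt; apply: eq_bigr => i _; rewrite expr2.
by rewrite normE -(ler_psqrt (dot_ge0 u)) ?sqrtr_sqr ?ger0_norm // nnegrE exprn_ge0.
Qed.

Lemma enormN u : enorm (- u) = enorm u.
Proof.
by rewrite /enorm; congr Num.sqrt; apply: eq_bigr => i _; rewrite mxE sqrrN.
Qed.

Lemma sub_bcomp_bcomp A : A `<=` bcomp (bcomp A).
Proof. by move=> a Aa y /(_ a Aa); rewrite /cball /= -opprB enormN. Qed.

End Euclid.

Lemma sqrt_radius_root {R : realType} (r : R) : r ^+ 2 < 1 ->
  let p := Num.sqrt (5 / 4 - r ^+ 2) - 1 / 2 in 0 < p /\ p ^+ 2 + p + r ^+ 2 = 1.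
Proof.
move=> r1 p; have pos : 0 <= 5 / 4 - r ^+ 2 by lra.
have := sqr_sqrtr pos; have := sqrtr_ge0 (5 / 4 - r ^+ 2); rewrite /p; nra.
Qed.

Theorem theorem3p25 (R : realType) (n : nat) (hn : (2 <= n)%N)
  (K : set 'rV[R]_n) (r : R) (hK : in_Sn K) (hr0 : 0 < r) (hr1 : r < 1)
  (hKb : K `<=` cball 0 r) (hKcb : bcomp K `<=` cball 0 r) :
  cball 0 (Num.sqrt (5 / 4 - r ^+ 2) - 1 / 2) `<=` bcomp K `|` setneg K.
Proof.
case: hK => A KA.
have r1 : r ^+ 2 < 1 by nra.
have [p0 pr] := sqrt_radius_root r r1.
have r0 := ltW hr0.
move=> x; rewrite /cball /= subr0 enorm_le => [xp|]; last exact: ltW.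
have [|/existsPNP[y Ky xy]] := pselect (bcomp K x); [by left | right].
move: xy; rewrite /cball /= enorm_le // expr1n => /negP; rewrite -ltNge => xy.
rewrite /setneg KA => a Aa; rewrite /cball /= -opprD enormN enorm_le // expr1n.
have aKc : bcomp K a by rewrite KA; apply: sub_bcomp_bcomp.
have := hKb y Ky; have := hKcb a aKc; rewrite /cball /= !subr0 !enorm_le //.
have := Ky; rewrite KA => /(_ a Aa); rewrite /cball /= enorm_le // expr1n.
by move=> ya ar yr; exact/ltW/(dot_add_lt1 p0 pr xp yr ar ya xy).
Qed.
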